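(* For every $T\in[0,\infty]$ there exists a joint strategy $\pi^*\in\Pi$ such that $$J_T(\pi^* )=\inf_{\pi\in\Pi}J_T(\pi).$$
   Context: Let $G=(V,E,A,\phi)$ be a finite connected undirected graph with node set $V$, edge set $E$, edge lengths $A:E\to\mathbb{R}_{>0}$ and node weights $\phi:V\to\mathbb{R}_{>0}$. Let $|G|$ be its metric graph (each edge $e$ realized as a closed interval of length $A(e)$ glued at its endpoints) with the shortest-path metric $d$. Fix $k\ge 1$ robots $r_1,\dots,r_k$ and equip $|G|^k$ with $d_k(p,p')=\max_{i}d(p_i,p'_i)$. The set of feasible joint strategies is $\Pi=\{\pi\in C([0,\infty),|G|^k):\ d_k(\pi(t),\pi(t'))\le |t-t'|\ \forall t,t'\ge0\}$, and we write $\pi=(\pi_{r_1},\dots,\pi_{r_k})$. For $v\in V$ and $t\ge0$ let $\tau^\pi(v,t)=\sup\{t'\le t:\ \pi_r(t')=v\text{ for some }r\}$ if this set is nonempty and $\tau^\pi(v,t)=0$ otherwise; the latency is $L^\pi_v(t)=t-\tau^\pi(v,t)$ and the instantaneous worst weighted latency is $M^\pi(t)=\max_{v\in V}\phi(v)L^\pi_v(t)$. For $T\in[0,\infty)$ set $J_T(\pi)=\sup_{t\ge T}M^\pi(t)\in[0,\infty]$, and $J_\infty(\pi)=\limsup_{t\to\infty}M^\pi(t)$. *)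

From HB Require Import structures.
From mathcomp Require Import all_boot all_order all_algebra.
From mathcomp Require Import all_classical all_reals.
From mathcomp Require Import ereal.

Set Implicit Arguments.
Unset Strict Implicit.
Unset Printing Implicit Defensive.

Import Order.TTheory GRing.Theory Num.Theory.
Local Open Scope classical_set_scope.
Local Open Scope ring_scope.

Section MetricGraph.
Variables (R : realType) (V E : finType).
(* each edge e has endpoints (ends e).1 and (ends e).2 (loops/multi-edges allowed) *)
Variable ends : E -> V * V.
(* edge lengths A and node weights phi *)
Variable A : E -> R.
Variable phi : V -> R.

(* oriented edge: (e, true) goes from (ends e).1 to (ends e).2 *)
Definition osrc (x : E * bool) : V := if x.2 then (ends x.1).1 else (ends x.1).2.
Definition otgt (x : E * bool) : V := if x.2 then (ends x.1).2 else (ends x.1).1.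

Fixpoint is_walk (u v : V) (w : seq (E * bool)) : bool :=
  match w with
  | [::] => u == v
  | x :: w' => (osrc x == u) && is_walk (otgt x) v w'
  end.

Definition walk_len (w : seq (E * bool)) : R := \sum_(x <- w) A x.1.

Definition connected_graph : Prop :=
  (0 < #|V|)%N /\ forall u v : V, exists w, is_walk u v w.

Definition ndist (u v : V) : R := inf [set walk_len w | w in [set w | is_walk u v w]].

(* Points of the metric graph |G|: a node, or an interior point of edge e at
   distance s from (ends e).1, with 0 < s < A e. *)
Inductive mpoint : Type :=
| PNode of V
| PEdge of E & R.

Definition valid_point (p : mpoint) : Prop :=
  match p with
  | PNode _ => True
  | PEdge e s => 0 < s < A e
  end.

(* the endpoints through which a point can be left, with the distance to them *)
Definition anchors (p : mpoint) : seq (V * R) :=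
  match p with
  | PNode v => [:: (v, 0)]
  | PEdge e s => [:: ((ends e).1, s); ((ends e).2, A e - s)]
  end.

(* the shortest-path metric d of |G| : either go along the common edge, or
   leave p through an endpoint, travel in G, and enter q through an endpoint *)
Definition mdist (p q : mpoint) : R :=
  inf ([set x | exists a b, a \in anchors p /\ b \in anchors q /\
                            x = a.2 + ndist a.1 b.1 + b.2]
       `|` [set x | exists e s t, p = PEdge e s /\ q = PEdge e t /\ x = `|s - t|]).

Variable k : nat.

(* joint strategies: pi t r is the position of robot r at time t (only t >= 0 matters) *)
Definition strategy := R -> 'I_k -> mpoint.

(* the feasible set Pi: valid positions and d_k-1-Lipschitz on [0,oo)
   (d_k(p,p') <= c  iff  d(p_r,p'_r) <= c for all r); continuity follows. *)
Definition feasible (pi : strategy) : Prop :=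
  (forall t, 0 <= t -> forall r, valid_point (pi t r)) /\
  (forall t t', 0 <= t -> 0 <= t' -> forall r, mdist (pi t r) (pi t' r) <= `|t - t'|).

Definition last_visit (pi : strategy) (v : V) (t : R) : R :=
  let S := [set t' | 0 <= t' <= t /\ exists r, pi t' r = PNode v] in
  if `[< S !=set0 >] then sup S else 0.

Definition latency (pi : strategy) (v : V) (t : R) : R := t - last_visit pi v t.

(* instantaneous worst weighted latency (all terms are >= 0 for t >= 0) *)
Definition worst_latency (pi : strategy) (t : R) : R :=
  \big[Num.max/0]_(v : V) (phi v * latency pi v t).

Definition J_fin (T : R) (pi : strategy) : \bar R :=
  ereal_sup [set (worst_latency pi t)%:E | t in [set t | T <= t]].

(* J_oo = limsup_{t -> oo} M^pi(t) = inf_{T >= 0} sup_{t >= T} M^pi(t) *)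
Definition J_inf (pi : strategy) : \bar R :=
  ereal_inf [set J_fin T pi | T in [set T | 0 <= T]].

Definition J (T : \bar R) (pi : strategy) : \bar R :=
  match T with
  | EFin T' => J_fin T' pi
  | +oo%E => J_inf pi
  | -oo%E => J_fin 0 pi (* unused: T >= 0 *)
  end.

End MetricGraph.

(* Let c be the infimum of J_T over Pi; if it is finite, for every n there is a
   feasible pi_n whose weighted latency stays below c + 1/(n+1) from the horizon
   on (for T = +oo after a time shift).  Along a free ultrafilter on nat, the
   positions pi_n(t)_r converge for every t and r simultaneously, because the
   metric graph is a finite union of compact segments; the limit pi is again
   1-Lipschitz by the triangle inequality.  Latencies are lower semicontinuous
   along this limit: a point close enough to a node is that node, so limits of
   visit times of v are visit times of v.  Hence the weighted latency of pi stays
   below c from the horizon on, and J_T(pi) = c. *)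

From Pilot Require Import Defs.
From HB Require Import structures.
From mathcomp Require Import all_boot all_order all_algebra.
From mathcomp Require Import all_classical all_reals.
From mathcomp Require Import ereal.
From mathcomp Require Import lra.
Import Order.TTheory GRing.Theory Num.Theory.
Local Open Scope classical_set_scope.
Local Open Scope ring_scope.

Set Implicit Arguments.
Unset Strict Implicit.
Unset Printing Implicit Defensive.

Lemma eventually_invS_lt (R : archiRealFieldType) (e : R) :
  0 < e -> exists N, forall n, (N <= n)%N -> n.+1%:R^-1 < e.
Proof.
move=> e0; exists (Num.Def.archi_bound e^-1) => n hn.
rewrite -[e]invrK ltf_pV2 ?posrE ?invr_gt0 ?ltr0Sn //.
apply: lt_le_trans (archi_boundP (ltW _)) _; first by rewrite invr_gt0.
by rewrite ler_nat; apply: leq_trans hn _.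
Qed.

Section UltrafilterLimits.
Variable U : set_system nat.
Context {U_ultra : UltraFilter U}.

Lemma ultra_const (T : finType) (f : nat -> T) : exists c, U [set n | f n = c].
Proof.
apply: contrapT => hne.
have Uneq c : U [set n | f n != c].
  have [Uc|UCc] := in_ultra_setVsetC [set n | f n = c] U_ultra.
    by case: hne; exists c.
  by apply: filterS UCc => n /eqP.
have [n /(_ (f n))] := filter_ex (filter_forall _ Uneq).
by rewrite /= eqxx.
Qed.

Lemma ultra_real_limit (R : realType) (x : nat -> R) lo hi :
  U [set n | lo <= x n <= hi] ->
  exists2 s, lo <= s <= hi & forall eps, 0 < eps -> U [set n | `|x n - s| < eps].
Proof.
move=> Ub; pose S := [set a | U [set n | a <= x n]].
have Slo : S lo by apply: filterS Ub => n /andP[].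
have S_le_hi a : S a -> a <= hi.
  move=> Sa; rewrite leNgt; apply/negP => hia; apply: (filter_not_empty U).
  by apply: filterS (filterI Sa Ub) => n [/= an /andP[_]]; lra.
have hsup : has_sup S by split; [exists lo | exists hi => a /S_le_hi].
exists (sup S).
  rewrite (ub_le_sup (proj2 hsup)) //=.
  by apply: ge_sup; [exists lo | move=> a /S_le_hi].
move=> eps e0; have [a Sa alt] := sup_adherent e0 hsup.
have Ugt : U [set n | sup S - eps < x n] by apply: filterS Sa => n /=; lra.
have Ult : U [set n | x n < sup S + eps].
  have [//|UC] := in_ultra_setVsetC [set n | x n < sup S + eps] U_ultra.
  have : S (sup S + eps) by apply: filterS UC => n /= /negP; rewrite -leNgt.
  by move=> /(ub_le_sup (proj2 hsup)); lra.
apply: filterS (filterI Ugt Ult) => n [/= h1 h2].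
by rewrite ltr_norml; apply/andP; split; lra.
Qed.

End UltrafilterLimits.

Section VisitTimes.
Variables (R : realType) (V E : finType) (k : nat).
Variables (pi : strategy R V E k) (v : V) (t : R).

Definition visit_times := [set t' | 0 <= t' <= t /\ exists r, pi t' r = PNode R E v].

Lemma last_visitE : visit_times !=set0 -> last_visit pi v t = sup visit_times.
Proof. by rewrite /last_visit; case: asboolP. Qed.

Lemma last_visit0 : ~ (visit_times !=set0) -> last_visit pi v t = 0.
Proof. by rewrite /last_visit; case: asboolP. Qed.

Lemma has_sup_visit_times : visit_times !=set0 -> has_sup visit_times.
Proof. by split => //; exists t => y [/andP[]]. Qed.

Lemma last_visit_ge y : visit_times y -> y <= last_visit pi v t.
Proof.
move=> hy; have ne : visit_times !=set0 by exists y.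
by rewrite last_visitE //; apply: ub_le_sup => //; case: (has_sup_visit_times ne).
Qed.

Lemma last_visit_ge0 : 0 <= last_visit pi v t.
Proof.
have [[y hy]|ne] := pselect (visit_times !=set0); last by rewrite last_visit0.
by apply: le_trans (last_visit_ge hy); case: hy => /andP[].
Qed.

Lemma latency_recent_visit d : visit_times !=set0 -> 0 < d ->
  exists2 y, visit_times y & t - y < latency pi v t + d.
Proof.
move=> ne d0; have [y hy hlt] := sup_adherent d0 (has_sup_visit_times ne).
by exists y => //; rewrite /latency last_visitE //; lra.
Qed.

End VisitTimes.

Section MetricGraph.
Variables (R : realType) (V E : finType) (ends : E -> V * V) (A : E -> R).

Lemma is_walk_cat u v x w1 w2 :
  is_walk ends u v w1 -> is_walk ends v x w2 -> is_walk ends u x (w1 ++ w2).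
Proof.
elim: w1 u => [|y w1 IH] u /=; first by move/eqP->.
by case/andP=> -> /IH H /H ->.
Qed.

Definition rev_walk (w : seq (E * bool)) := rev [seq (x.1, ~~ x.2) | x <- w].

Lemma is_walk_rev u v w : is_walk ends u v w -> is_walk ends v u (rev_walk w).
Proof.
elim: w u => [|[e b] w IH] u /=; first by move/eqP->.
case/andP=> /eqP <- /IH hw; rewrite /rev_walk map_cons rev_cons -cats1.
by apply: is_walk_cat hw _; rewrite /= /osrc /otgt /=; case: b; rewrite !eqxx.
Qed.

Hypothesis A_gt0 : forall e, 0 < A e.
Hypothesis walk_exists : forall u v, exists w, is_walk ends u v w.

Lemma walk_len_ge0 w : 0 <= walk_len A w.
Proof. by apply: sumr_ge0 => x _; apply/ltW. Qed.

Lemma walk_len_cat w1 w2 : walk_len A (w1 ++ w2) = walk_len A w1 + walk_len A w2.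
Proof. exact: big_cat. Qed.

Lemma walk_len_rev w : walk_len A (rev_walk w) = walk_len A w.
Proof. by rewrite /walk_len /rev_walk big_rev big_map. Qed.

Lemma ndist_le_walk u v w : is_walk ends u v w -> ndist ends A u v <= walk_len A w.
Proof.
move=> hw; apply: ge_inf; last by exists w.
by exists 0 => _ [w' _ <-]; apply: walk_len_ge0.
Qed.

Lemma ndist_lb u v c :
  (forall w, is_walk ends u v w -> c <= walk_len A w) -> c <= ndist ends A u v.
Proof.
move=> hc; have [w hw] := walk_exists u v.
by apply: lb_le_inf => [|_ [w' hw' <-]]; [exists (walk_len A w), w | exact: hc].
Qed.

Lemma ndist_ge0 u v : 0 <= ndist ends A u v.
Proof. by apply: ndist_lb => w _; apply: walk_len_ge0. Qed.

Lemma ndistxx u : ndist ends A u u = 0.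
Proof.
apply/le_anti; rewrite ndist_ge0 andbT.
by have := @ndist_le_walk u u [::] (eqxx _); rewrite /walk_len big_nil.
Qed.

Lemma ndistC u v : ndist ends A u v = ndist ends A v u.
Proof.
suff le_ndistC a b : ndist ends A a b <= ndist ends A b a.
  by apply/le_anti; rewrite !le_ndistC.
apply: ndist_lb => w hw; rewrite -walk_len_rev.
exact/ndist_le_walk/is_walk_rev.
Qed.

Lemma ndist_triangle u v x :
  ndist ends A u x <= ndist ends A u v + ndist ends A v x.
Proof.
rewrite -lerBlDl; apply: ndist_lb => w2 h2; rewrite lerBlDl addrC -lerBlDl.
apply: ndist_lb => w1 h1; rewrite lerBlDl addrC -walk_len_cat.
exact/ndist_le_walk/(is_walk_cat h1 h2).
Qed.

Lemma ndist_edge e : ndist ends A (ends e).1 (ends e).2 <= A e.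
Proof.
have := @ndist_le_walk (ends e).1 (ends e).2 [:: (e, true)].
by rewrite /walk_len big_seq1 /= /osrc /otgt /= !eqxx; apply.
Qed.

Lemma ndist_sep :
  exists2 m, 0 < m & forall u v, u != v -> m <= ndist ends A u v.
Proof.
exists (\big[Order.min/1]_e A e).
  by elim/big_ind: _ => // x y x0 y0; rewrite lt_min x0 y0.
move=> u v uv; apply: ndist_lb => -[|x w] /=; first by rewrite (negbTE uv).
case/andP=> _ _; rewrite /walk_len big_cons.
by apply: le_trans (bigmin_le _ x.1 _) _; rewrite lerDl walk_len_ge0.
Qed.

Definition mdist_set (p q : mpoint R V E) :=
  [set x | exists a b, a \in anchors ends A p /\ b \in anchors ends A q /\
                       x = a.2 + ndist ends A a.1 b.1 + b.2]
  `|` [set x | exists e s t, p = PEdge V e s /\ q = PEdge V e t /\ x = `|s - t|].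

Lemma anchors_ge0 p a : valid_point A p -> a \in anchors ends A p -> 0 <= a.2.
Proof.
case: p => [v|e s] /=; first by rewrite inE => _ /eqP ->.
case/andP=> s0 sA; rewrite !inE => /orP[] /eqP -> /=; first exact: ltW.
by rewrite subr_ge0 ltW.
Qed.

Lemma mdist_set_ge0 p q y : valid_point A p -> valid_point A q ->
  mdist_set p q y -> 0 <= y.
Proof.
move=> vp vq [[a [b [ha [hb ->]]]]|[e [s [t [_ [_ ->]]]]]] //.
by rewrite !addr_ge0 ?(anchors_ge0 vp ha) ?(anchors_ge0 vq hb) ?ndist_ge0.
Qed.

Lemma mdist_le p q y : valid_point A p -> valid_point A q ->
  mdist_set p q y -> Defs.mdist ends A p q <= y.
Proof.
move=> vp vq hy; apply: ge_inf hy.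
by exists 0 => x; apply: mdist_set_ge0.
Qed.

Lemma mdist_ge p q c :
  (forall y, mdist_set p q y -> c <= y) -> c <= Defs.mdist ends A p q.
Proof.
have [a ha] : exists a, a \in anchors ends A p.
  by case: p => [v|e s]; eexists; exact: mem_head.
have [b hb] : exists b, b \in anchors ends A q.
  by case: q => [v|e s]; eexists; exact: mem_head.
move=> hc; apply: lb_le_inf hc.
by exists (a.2 + ndist ends A a.1 b.1 + b.2); left; exists a, b.
Qed.

Lemma mdist_ge0 p q : valid_point A p -> valid_point A q -> 0 <= Defs.mdist ends A p q.
Proof. by move=> vp vq; apply: mdist_ge => y; apply: mdist_set_ge0. Qed.

Lemma mdistxx p : valid_point A p -> Defs.mdist ends A p p = 0.
Proof.
move=> vp; apply/le_anti; rewrite mdist_ge0 // andbT.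
case: p vp => [v|e s] vp; apply: mdist_le => //.
  by left; exists (v, 0), (v, 0); rewrite mem_head ndistxx ?addr0.
by right; exists e, s, s; rewrite subrr normr0.
Qed.

Lemma mdistC p q : Defs.mdist ends A p q = Defs.mdist ends A q p.
Proof.
suff sub a b : mdist_set a b `<=` mdist_set b a.
  by rewrite /Defs.mdist; congr inf; apply/seteqP; split; apply: sub.
move=> _ [[x [y [hx [hy ->]]]]|[e [s [t [-> [-> ->]]]]]].
  by left; exists y, x; do !split=> //; rewrite ndistC; lra.
by right; exists e, t, s; rewrite distrC.
Qed.

Lemma anchors_ndist q b c : valid_point A q ->
  b \in anchors ends A q -> c \in anchors ends A q -> ndist ends A b.1 c.1 <= b.2 + c.2.
Proof.
case: q => [v|e s] /=.
  by move=> _; rewrite !inE => /eqP -> /eqP ->; rewrite ndistxx addr0.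
case/andP=> s0 sA; rewrite !inE => /orP[] /eqP -> /orP[] /eqP -> /=.
- by rewrite ndistxx addr_ge0 // ltW.
- by rewrite addrC subrK ndist_edge.
- by rewrite subrK ndistC ndist_edge.
- by rewrite ndistxx addr_ge0 // subr_ge0 ltW.
Qed.

Lemma anchors_shift e s t c : c \in anchors ends A (PEdge V e t) ->
  exists a, [/\ a \in anchors ends A (PEdge V e s), a.1 = c.1 & a.2 <= `|s - t| + c.2].
Proof.
rewrite !inE => /orP[] /eqP ->.
  exists ((ends e).1, s); split => //=; first by rewrite mem_head.
  by rewrite -lerBlDr ler_norm.
exists ((ends e).2, A e - s); split => //=; first by rewrite !inE eqxx orbT.
by have := ler_norm (t - s); rewrite distrC; lra.
Qed.

Lemma mdist_triangle p q r : valid_point A p -> valid_point A q -> valid_point A r ->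
  Defs.mdist ends A p r <= Defs.mdist ends A p q + Defs.mdist ends A q r.
Proof.
move=> vp vq vr.
suff le_sum x y : mdist_set p q x -> mdist_set q r y -> Defs.mdist ends A p r <= x + y.
  rewrite -lerBlDr; apply: mdist_ge => y hy; rewrite lerBlDr addrC -lerBlDr.
  by apply: mdist_ge => x hx; rewrite lerBlDr addrC; apply: le_sum.
move=> [[a [b [ha [hb ->]]]]|[e [s [t [ep [eq ->]]]]]]
       [[c [d [hc [hd ->]]]]|[e' [t' [u [eq' [er ->]]]]]].
- apply: le_trans (mdist_le vp vr _) _; first by left; exists a, d.
  have := @ndist_triangle a.1 b.1 d.1.
  have := @ndist_triangle b.1 c.1 d.1.
  have := anchors_ndist vq hb hc; lra.
- subst q r; have [d [hd <- d2]] := anchors_shift u hb.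
  apply: le_trans (mdist_le vp vr _) _; first by left; exists a, d.
  by move: d2; rewrite distrC; lra.
- subst p q; have [a [ha <- a2]] := anchors_shift s hc.
  apply: le_trans (mdist_le vp vr _) _; first by left; exists a, d.
  by rewrite !addrA !lerD2r.
- rewrite eq in eq'; case: eq' => e_eq t_eq; subst.
  by apply: le_trans (mdist_le vp vr _) (ler_distD _ _ _); right; do 3!eexists.
Qed.

Lemma edge_point_near e s : 0 <= s <= A e ->
  exists2 q, valid_point A q &
    forall t, 0 < t < A e -> Defs.mdist ends A (PEdge V e t) q <= `|t - s|.
Proof.
case/andP; rewrite le_eqVlt => /predU1P[<- _|s0].
  exists (PNode R E (ends e).1) => // t vt; have /andP[t0 _] := vt.
  rewrite subr0 gtr0_norm //; apply: mdist_le => //; left.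
  exists ((ends e).1, t), ((ends e).1, 0); rewrite !inE !eqxx.
  by do !split => //=; rewrite ndistxx // !addr0.
rewrite le_eqVlt => /predU1P[-> |sA].
  exists (PNode R E (ends e).2) => // t vt; have /andP[_ tA] := vt.
  rewrite distrC gtr0_norm ?subr_gt0 //; apply: mdist_le => //; left.
  exists ((ends e).2, A e - t), ((ends e).2, 0); rewrite !inE !eqxx orbT.
  by do !split => //=; rewrite ndistxx // !addr0.
have vs : valid_point A (PEdge V e s) by rewrite /= s0 sA.
by exists (PEdge V e s) => // t vt; apply: mdist_le => //; right; exists e, t, s.
Qed.

Lemma mdist_node_sep x v : valid_point A x -> x <> PNode R E v ->
  exists2 m, 0 < m & m <= Defs.mdist ends A x (PNode R E v).
Proof.
case: x => [u|e s] /= vx hne.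
  have uv : u != v by apply/eqP => uv; apply: hne; rewrite uv.
  have [m m0 hm] := ndist_sep.
  exists m => //; apply: mdist_ge => _ [[a [b [/= ha [hb ->]]]]|[? [? [? [//]]]]].
  by move: ha hb; rewrite !inE => /eqP -> /eqP ->; rewrite /= addr0 add0r hm.
case/andP: vx => s0 sA; exists (Order.min s (A e - s)).
  by rewrite lt_min s0 subr_gt0.
apply: mdist_ge => _ [[a [b [ha [hb ->]]]]|[? [? [? [_ [//]]]]]].
move: hb; rewrite inE => /eqP -> /=; rewrite addr0.
have := ndist_ge0 a.1 v.
by move: ha; rewrite !inE => /orP[] /eqP -> /= nd; rewrite ge_min lerDl nd ?orbT.
Qed.

Lemma eq_node_of_mdist_small x v : valid_point A x ->
  (forall eps, 0 < eps -> Defs.mdist ends A x (PNode R E v) <= eps) -> x = PNode R E v.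
Proof.
move=> vx small; apply: contrapT => /(mdist_node_sep vx) [m m0 hm].
by have := small (m / 2); rewrite divr_gt0 // => /(_ isT); lra.
Qed.

Section StrategyLimits.
Variables (k : nat) (U : set_system nat).
Context {U_ultra : UltraFilter U}.

Definition point_cell (p : mpoint R V E) : V + E :=
  match p with PNode v => inl v | PEdge e _ => inr e end.

Lemma ultra_point_limit (p : nat -> mpoint R V E) :
  (forall n, valid_point A (p n)) ->
  exists2 q, valid_point A q &
    forall eps, 0 < eps -> U [set n | Defs.mdist ends A (p n) q <= eps].
Proof.
move=> vp; have [[v|e] Ucell] := ultra_const (fun n => point_cell (p n)).
  exists (PNode R E v) => // eps e0; apply: filterS Ucell => n /=.
  by case: (p n) (vp n) => [v'|//] _ [->]; rewrite mdistxx // ltW.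
pose x n := if p n is PEdge _ s then s else 0.
have Ub : U [set n | 0 <= x n <= A e].
  apply: filterS Ucell => n /=; rewrite /x.
  by case: (p n) (vp n) => [v' _ /= //|e' s /andP[s0 sA] [<-]]; rewrite !ltW.
have [s sb hs] := ultra_real_limit Ub.
have [q vq hq] := edge_point_near sb.
exists q => // eps e0; apply: filterS (filterI Ucell (hs eps e0)) => n [] /=.
rewrite /x; case: (p n) (vp n) => [v' _ /= //|e' t vt [ee'] hts]; subst e'.
exact: le_trans (hq t vt) (ltW hts).
Qed.

Lemma limit_strategy (pis : nat -> strategy R V E k) :
  (forall n, feasible ends A (pis n)) ->
  exists2 pi : strategy R V E k, feasible ends A pi &
    forall t, 0 <= t -> forall r eps, 0 < eps ->
      U [set n | Defs.mdist ends A (pis n t r) (pi t r) <= eps].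
Proof.
move=> feas.
have limit_at (tr : R * 'I_k) : exists q, 0 <= tr.1 -> valid_point A q /\
    forall eps, 0 < eps -> U [set n | Defs.mdist ends A (pis n tr.1 tr.2) q <= eps].
  case: tr => t r /=; have [t0|_] := boolP (0 <= t); last by exists (pis 0%N t r).
  by have [q vq hq] := ultra_point_limit (fun n => (feas n).1 t t0 r); exists q.
have [f hf] := choice limit_at.
have valid_f t r : 0 <= t -> valid_point A (f (t, r)).
  by move=> t0; have [] := hf (t, r) t0.
exists (fun t r => f (t, r)); last by move=> t t0 r; have [] := hf (t, r) t0.
split => [t t0 r|t t' t0 t'0 r]; first exact: valid_f.
apply/ler_addgt0Pr => eps e0; have e2 : 0 < eps / 2 by rewrite divr_gt0.
have [_ c1] := hf (t, r) t0; have [_ c2] := hf (t', r) t'0.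
have [n /= [h1 h2]] := filter_ex (filterI (c1 _ e2) (c2 _ e2)).
have vn := (feas n).1 t t0 r; have vn' := (feas n).1 t' t'0 r.
have := (feas n).2 t t' t0 t'0 r.
have := mdist_triangle (valid_f t r t0) vn (valid_f t' r t'0).
have := mdist_triangle vn vn' (valid_f t' r t'0).
by rewrite mdistC in h1; lra.
Qed.

Variables (pis : nat -> strategy R V E k) (pi : strategy R V E k).
Hypothesis pis_feasible : forall n, feasible ends A (pis n).
Hypothesis pi_feasible : feasible ends A pi.
Hypothesis pi_limit : forall t, 0 <= t -> forall r eps, 0 < eps ->
  U [set n | Defs.mdist ends A (pis n t r) (pi t r) <= eps].

Lemma limit_visit (y : nat -> R) s r v : 0 <= s ->
  U [set n | 0 <= y n /\ pis n (y n) r = PNode R E v] ->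
  (forall eps, 0 < eps -> U [set n | `|y n - s| < eps]) ->
  pi s r = PNode R E v.
Proof.
move=> s0 Uvisit ys; apply: eq_node_of_mdist_small => [|eps e0].
  exact: pi_feasible.1.
have e2 : 0 < eps / 2 by rewrite divr_gt0.
have [n /= [[y0 hv] [hy hc]]] :=
  filter_ex (filterI Uvisit (filterI (ys _ e2) (pi_limit s0 r e2))).
have vv : valid_point A (PNode R E v) by [].
have := mdist_triangle (pi_feasible.1 s s0 r) ((pis_feasible n).1 s s0 r) vv.
have := (pis_feasible n).2 s (y n) s0 y0 r; rewrite hv.
by rewrite mdistC in hc; rewrite distrC in hy; lra.
Qed.

Lemma latency_limit v t L : 0 <= t ->
  (forall d, 0 < d -> U [set n | latency (pis n) v t <= L + d]) ->
  latency pi v t <= L.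
Proof.
move=> t0 hL; apply/ler_addgt0Pr => d d0; have d2 : 0 < d / 2 by rewrite divr_gt0.
pose W := [set n | latency (pis n) v t <= L + d / 2].
have UW : U W := hL _ d2.
have [[n [Wn novisit]]|visited] :=
  pselect (exists n, W n /\ ~ (visit_times (pis n) v t !=set0)).
  move: Wn; rewrite /W /= /latency last_visit0 // subr0.
  by have := last_visit_ge0 pi v t; lra.
have visitW n : W n -> visit_times (pis n) v t !=set0.
  by move=> Wn; apply: contrapT => nv; apply: visited; exists n.
have [r0] : inhabited 'I_k.
  by have [n Wn] := filter_ex UW; have [_ [_ [r _]]] := visitW n Wn; exact: inhabits r.
have recent n : exists yr : R * 'I_k, W n ->
    [/\ 0 <= yr.1 <= t, pis n yr.1 yr.2 = PNode R E v & t - yr.1 < L + d].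
  have [Wn|nWn] := pselect (W n); last by exists (0, r0) => /nWn.
  have [y [yt [r hr]] hy] := latency_recent_visit (visitW n Wn) d2.
  by exists (y, r) => _; split => //=; move: Wn; rewrite /W /=; lra.
have [g hg] := choice recent.
have [r Ur] := ultra_const (fun n => (g n).2).
have [s /andP[s0 st] hs] : exists2 s, 0 <= s <= t &
    forall eps, 0 < eps -> U [set n | `|(g n).1 - s| < eps].
  by apply: ultra_real_limit; apply: filterS UW => n /(hg n) [].
have pisr : pi s r = PNode R E v.
  apply: (limit_visit s0 _ hs).
  by apply: filterS (filterI UW Ur) => n [/(hg n) [/andP[y0 _] hv _] /= <-].
have ts : t - s <= L + d.
  apply/ler_addgt0Pr => eps e0.
  have [n [Wn /= hn]] := filter_ex (filterI UW (hs _ e0)).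
  have [_ _ hlt] := hg n Wn; move: hn; rewrite ltr_norml; lra.
have := last_visit_ge (conj (introT andP (conj s0 st)) (ex_intro _ r pisr)).
by rewrite /latency; lra.
Qed.

End StrategyLimits.

Variables (phi : V -> R) (k : nat).
Hypothesis phi_gt0 : forall v, 0 < phi v.

Lemma bound_attained (c T0 : R) : 0 <= c -> 0 <= T0 ->
  (forall n : nat, exists pi : strategy R V E k, feasible ends A pi /\
     forall t, T0 <= t -> worst_latency phi pi t <= c + n.+1%:R^-1) ->
  exists pi : strategy R V E k, feasible ends A pi /\
     forall t, T0 <= t -> worst_latency phi pi t <= c.
Proof.
move=> c0 T00 near_opt; have [pis hpis] := choice near_opt.
have [U [U_ultra U_tail]] := ultraFilterLemma eventually_filter.
have [pi fpi pi_limit] := limit_strategy (fun n => (hpis n).1).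
exists pi; split => // t tT; have t0 : 0 <= t := le_trans T00 tT.
apply: bigmax_le => // v _; have pv := phi_gt0 v.
rewrite mulrC -ler_pdivlMr //.
apply: (latency_limit (fun n => (hpis n).1) fpi pi_limit t0) => d d0.
have [N hN] := eventually_invS_lt (mulr_gt0 pv d0).
apply: filterS (U_tail [set n | (N <= n)%N] _); last by exists N.
move=> n /= /hN hn.
rewrite -(ler_pM2l pv) [X in _ <= X]mulrDr mulrCA divff ?gt_eqF // mulr1.
apply: le_trans (le_bigmax _ (fun v => phi v * latency (pis n) v t) v) _.
by apply: le_trans ((hpis n).2 t tT) _; rewrite lerD2l ltW.
Qed.

End MetricGraph.

Section Objective.
Variables (R : realType) (V E : finType) (ends : E -> V * V) (A : E -> R).
Variables (phi : V -> R) (k : nat).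
Hypothesis phi_gt0 : forall v, 0 < phi v.
Implicit Types pi : strategy R V E k.

Definition shift pi (T1 : R) : strategy R V E k :=
  fun t r => pi (t + T1) r.

Lemma feasible_shift pi T1 :
  0 <= T1 -> feasible ends A pi -> feasible ends A (shift pi T1).
Proof.
move=> T10 [valid_pi lip_pi]; split => [t t0 r|t t' t0 t'0 r].
  by apply: valid_pi; rewrite addr_ge0.
have := lip_pi (t + T1) (t' + T1) (addr_ge0 t0 T10) (addr_ge0 t'0 T10) r.
by rewrite opprD addrACA subrr addr0.
Qed.

Lemma worst_latency_ge0 pi t : 0 <= worst_latency phi pi t.
Proof.
by rewrite /worst_latency; elim/big_rec: _ => // v x _ hx; rewrite le_max hx orbT.
Qed.

Lemma worst_latency_shift pi T1 t : 0 <= T1 -> 0 <= t ->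
  worst_latency phi (shift pi T1) t <= worst_latency phi pi (t + T1).
Proof.
move=> T10 t0; apply: bigmax_le; first exact: worst_latency_ge0.
move=> v _; apply: le_trans (le_bigmax _ (fun v => phi v * latency pi v (t + T1)) v).
rewrite ler_pM2l //.
suff : last_visit pi v (t + T1) <= last_visit (shift pi T1) v t + T1.
  by rewrite /latency; lra.
have [ne|] := pselect (visit_times pi v (t + T1) !=set0); last first.
  by move=> /last_visit0 ->; rewrite addr_ge0 // last_visit_ge0.
rewrite last_visitE //; apply: ge_sup => // x [/andP[x0 xt] [r hr]].
have [T1x|xT1] := leP T1 x; last by have := last_visit_ge0 (shift pi T1) v t; lra.
rewrite -lerBlDr; apply: last_visit_ge; split; first by apply/andP; lra.
by exists r; rewrite /shift subrK.
Qed.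

Lemma J_fin_ge0 T pi : (0 <= J_fin phi T pi)%E.
Proof.
apply: le_trans (ereal_sup_ubound _) => /=; last by exists T.
by rewrite lee_fin worst_latency_ge0.
Qed.

Lemma J_ge0 T pi : (0 <= J phi T pi)%E.
Proof.
case: T => [T| |] /=; try exact: J_fin_ge0.
by apply: le_ereal_inf_tmp => _ [T' _ <-]; apply: J_fin_ge0.
Qed.

Lemma J_fin_le_bound T pi c :
  (forall t, T <= t -> worst_latency phi pi t <= c) -> (J_fin phi T pi <= c%:E)%E.
Proof. by move=> hc; apply: ge_ereal_sup => _ [t tT <-]; rewrite lee_fin hc. Qed.

Lemma worst_latency_le_of_J_fin_lt T pi c :
  (J_fin phi T pi < c%:E)%E -> forall t, T <= t -> worst_latency phi pi t <= c.
Proof.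
move=> hlt t tT; rewrite -lee_fin; apply/ltW/(le_lt_trans _ hlt).
by apply: ereal_sup_ubound; exists t.
Qed.

(* The time from which J_T controls the worst latency; for T = +oo a time shift
   brings it to 0. *)
Definition horizon (T : \bar R) : R := if T is EFin T' then T' else 0.

Lemma horizon_ge0 T : (0 <= T)%E -> 0 <= horizon T.
Proof. by case: T. Qed.

Lemma J_le_bound T pi c : (0 <= T)%E ->
  (forall t, horizon T <= t -> worst_latency phi pi t <= c) -> (J phi T pi <= c%:E)%E.
Proof.
case: T => [T| |] //= _ hc; first exact: J_fin_le_bound.
apply: le_trans _ (J_fin_le_bound hc).
by apply: ereal_inf_lbound; exists 0 => /=; rewrite ?lexx.
Qed.

Lemma bounded_strategy_of_J_lt T pi c :
  (0 <= T)%E -> feasible ends A pi -> (J phi T pi < c%:E)%E ->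
  exists pi' : strategy R V E k, feasible ends A pi' /\
    forall t, horizon T <= t -> worst_latency phi pi' t <= c.
Proof.
case: T => [T| |] //= _ fpi.
  by move=> hlt; exists pi; split => //; exact: worst_latency_le_of_J_fin_lt.
(* For T = +oo some J_fin T1 is below c: shifting by T1 moves this bound to time 0. *)
move=> /ereal_inf_lt [_ [T1 T10 <-] hlt]; exists (shift pi T1).
split => [|t t0]; first exact: feasible_shift.
apply: le_trans (worst_latency_shift _ T10 t0) _.
by apply: (worst_latency_le_of_J_fin_lt hlt); lra.
Qed.

End Objective.

Unset Implicit Arguments.
Set Strict Implicit.

Theorem mainTheorem1 (R : realType) (V E : finType) (ends : E -> V * V)
  (A : E -> R) (phi : V -> R) (k : nat) :
  (forall e, 0 < A e) -> (forall v, 0 < phi v) -> connected_graph ends ->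
  (0 < k)%N ->
  forall T : \bar R, (0 <= T)%E ->
  exists pistar : strategy R V E k,
    feasible (k:=k) ends A pistar /\
    J (k:=k) phi T pistar =
      ereal_inf [set J (k:=k) phi T pi | pi in [set pi | feasible (k:=k) ends A pi]].
Proof.
move=> hA hphi [/card_gt0P [v0 _] hc] _ T hT.
set S := [set J phi T pi | pi in _].
have S_le (pi : strategy R V E k) : feasible ends A pi -> (ereal_inf S <= J phi T pi)%E.
  by move=> fpi; apply: ereal_inf_lbound; exists pi.
have [/eqP Soo|Sfin] := boolP (ereal_inf S == +oo%E).
  pose stay : strategy R V E k := fun _ _ => PNode R E v0.
  have stay_feasible : feasible ends A stay.
    by split => // t t' _ _ r; rewrite (mdistxx hA hc).
  by exists stay; split => //; apply/eqP; rewrite eq_le S_le // Soo leey.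
have S_ge0 : (0 <= ereal_inf S)%E.
  by apply: le_ereal_inf_tmp => _ [pi _ <-]; exact: J_ge0.
have [c Sc] : exists c, ereal_inf S = c%:E.
  by move: S_ge0 Sfin; case: (ereal_inf S) => [c| |] // _ _; exists c.
have c0 : 0 <= c by rewrite -lee_fin -Sc.
have near_opt n : exists pi : strategy R V E k, feasible ends A pi /\
    forall t, horizon T <= t -> worst_latency phi pi t <= c + n.+1%:R^-1.
  have : (ereal_inf S < (c + n.+1%:R^-1)%:E)%E by rewrite Sc lte_fin ltrDl invr_gt0.
  by move=> /ereal_inf_lt [_ [pi fpi <-]] /(bounded_strategy_of_J_lt hphi hT fpi).
have [pi [fpi hpi]] := bound_attained hA hc hphi c0 (horizon_ge0 hT) near_opt.
by exists pi; split => //; apply/eqP; rewrite eq_le S_le // andbT Sc J_le_bound.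
Qed.
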